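(* Let $\mathcal{F}$ be a $k$-uniform linear family and let $\nu=\nu(\mathcal{F})$. If $x$ is a vertex of $\mathcal{F}$ with $|\mathcal{F}_x|>k\nu$, then $x\in S_{\mathcal{F}}$.
   Context: A family is a finite collection of distinct subsets of a vertex set; it is $k$-uniform if every member has exactly $k$ elements and linear if any two distinct members share at most one vertex. A matching is a collection of pairwise disjoint members; $\nu(\mathcal{F})$ is the maximum size of a matching, and a maximum matching is one of that size. $\mathcal{F}_x=\{A\in\mathcal{F}:x\in A\}$. $S_{\mathcal{F}}$ denotes the set of vertices of $X_{\mathcal{F}}=\bigcup_{A\in\mathcal{F}}A$ that are covered by (i.e., belong to a member of) every maximum matching of $\mathcal{F}$. *)

From mathcomp Require Import all_boot.
Set Implicit Arguments. Unset Strict Implicit. Unset Printing Implicit Defensive.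

Section Families.
Variable T : finType.
Implicit Types (F M : {set {set T}}) (x : T) (k : nat).

Definition uniform k F : bool := [forall A in F, #|A| == k].

Definition linear_family F : bool :=
  [forall A in F, forall B in F, (A != B) ==> (#|A :&: B| <= 1)].

Definition is_matching F M : bool :=
  (M \subset F) && [forall A in M, forall B in M, (A != B) ==> [disjoint A & B]].

Definition nu F : nat := \max_(M : {set {set T}} | is_matching F M) #|M|.

Definition is_max_matching F M : bool := is_matching F M && (#|M| == nu F).

Definition star F x : {set {set T}} := [set A in F | x \in A].

Definition S_fam F : {set T} :=
  [set x in cover F | [forall M : {set {set T}}, is_max_matching F M ==> (x \in cover M)]].

End Families.

From mathcomp Require Import all_boot.

(** Let M be a maximum matching avoiding x.  Every member through x must meet
    the vertices covered by M, otherwise it could be added to M.  Choosing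
    such a vertex for each member through x is injective, because two
    members through x sharing a second vertex would violate linearity.
    Hence |F_x| <= |X_M| <= k|M| = k nu. *)

Set Implicit Arguments.
Unset Strict Implicit.
Unset Printing Implicit Defensive.

Section MatchingsInLinearFamilies.

Variable T : finType.
Implicit Types (F M : {set {set T}}) (A B : {set T}) (x y : T) (k : nat).

Lemma matching_card_le_nu F M : is_matching F M -> #|M| <= nu F.
Proof. exact: (@leq_bigmax_cond _ (is_matching F) (fun N => #|N|)). Qed.

Lemma matching_setU1 F M A :
  is_matching F M -> A \in F -> {in M, forall B, [disjoint A & B]} ->
  is_matching F (A |: M).
Proof.
move=> /andP[MF /forallP dM] AF dA; apply/andP; split.
  by apply/subsetP => B /setU1P[->|/(subsetP MF)].
apply/forallP => B; apply/implyP => /setU1P BM.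
apply/forallP => C; apply/implyP => /setU1P CM.
case: BM CM => [-> | BM] [-> | CM]; apply/implyP => neqBC.
- by rewrite eqxx in neqBC.
- exact: dA.
- by rewrite disjoint_sym dA.
- by move/implyP: (dM B) => /(_ BM) /forallP /(_ C) /implyP /(_ CM) /implyP; apply.
Qed.

Lemma max_matching_meets F M A :
  is_max_matching F M -> A \in F -> A != set0 -> ~~ [disjoint A & cover M].
Proof.
move=> /andP[mM /eqP cardM] AF /set0Pn[y yA]; apply/negP => dAM.
have AnotM : A \notin M.
  apply: contraL dAM => AM; apply/negP => /disjointFr /(_ yA) /negbT /negP; apply.
  by apply/bigcupP; exists A.
have dA : {in M, forall B, [disjoint A & B]}.
  move=> B BM; apply: disjointWr dAM; exact: bigcup_sup.
have := matching_card_le_nu (matching_setU1 mM AF dA).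
by rewrite cardsU1 AnotM cardM ltnn.
Qed.

Lemma linear_star_eq F x y A B :
  linear_family F -> A \in star F x -> B \in star F x ->
  y \in A -> y \in B -> y != x -> A = B.
Proof.
move=> /forallP lin; rewrite !inE => /andP[AF xA] /andP[BF xB] yA yB nyx.
apply/eqP; apply: contraTT (leqnn 2) => neqAB; rewrite -ltnNge ltnS.
have -> : 2 = #|[set x; y]| by rewrite cards2 eq_sym nyx.
apply: (@leq_trans #|A :&: B|); first apply: subset_leq_card.
  by apply/subsetP => z /set2P[->|->]; rewrite inE ?xA ?xB ?yA ?yB.
by move/implyP: (lin A) => /(_ AF) /forallP /(_ B) /implyP /(_ BF) /implyP; apply.
Qed.

Lemma card_cover_uniform F M k :
  uniform k F -> M \subset F -> #|cover M| <= k * #|M|.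
Proof.
move=> /forallP unif MF; apply: leq_trans (leq_card_cover M).1 _.
rewrite mulnC -sum_nat_const leq_sum // => A AM.
by move/implyP: (unif A) => /(_ (subsetP MF A AM)) /eqP ->.
Qed.

Lemma card_star_le_cover F M x :
  linear_family F -> is_max_matching F M -> x \notin cover M ->
  #|star F x| <= #|cover M|.
Proof.
move=> lin maxM xM.
pose f A := odflt x [pick y in A :&: cover M].
have fP A : A \in star F x -> f A \in A :&: cover M.
  rewrite inE => /andP[AF xA].
  have /(max_matching_meets maxM AF) : A != set0 by apply/set0Pn; exists x.
  rewrite -setI_eq0 /f; case: pickP => [//|none] /set0Pn[y].
  by rewrite none.
have f_inj : {in star F x &, injective f}.
  move=> A B Ax Bx fAB; move: (fP A Ax) (fP B Bx); rewrite !inE -fAB.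
  move=> /andP[yA yM] /andP[yB _]; apply: linear_star_eq lin Ax Bx yA yB _.
  by apply: contraNneq xM => <-.
rewrite -(card_in_imset f_inj); apply: subset_leq_card.
by apply/subsetP => _ /imsetP[A Ax ->]; move: (fP A Ax); rewrite inE => /andP[].
Qed.

End MatchingsInLinearFamilies.

Theorem proposition1 (T : finType) (k : nat) (F : {set {set T}}) (x : T) :
  uniform k F -> linear_family F -> x \in cover F ->
  #|star F x| > k * nu F ->
  x \in S_fam F.
Proof.
move=> unif lin xF big; rewrite inE xF /=.
apply/forallP => M; apply/implyP => maxM; apply: contraLR big => xM.
rewrite -leqNgt; have /andP[/andP[MF _] /eqP <-] := maxM.
exact: leq_trans (card_star_le_cover lin maxM xM) (card_cover_uniform unif MF).
Qed.
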